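(* Let $p$ be a prime, $e,r\ge2$ and $c,d\ge1$ integers with $d\mid e-1$, and let $R$ be a ring of characteristic $p^{r+1}$. Let $\mathbb S=R[x][y;\alpha]$ with $\alpha$ the $R$-ring automorphism of $R[x]$ given by $\alpha(x)=x+px^e$ (so $yx=(x+px^e)y$). Define $\Sigma_m=\frac{e^m-1}{e-1}$ for $m\in\mathbb N$, let $\mu\ge1$ be the integer with $c\Sigma_{\mu-1}\le r<c\Sigma_\mu$, and set $\overline\Sigma_m=c\Sigma_m$ for $0\le m\le\mu$ and $\overline\Sigma_{\mu+s}=c(s+\Sigma_\mu)+sr(e-1)$ for $s\in\mathbb N$. Let $$\widetilde{\mathcal T}=\{x^ny^m: m,n\in\mathbb N,\ n-cm\in d\mathbb Z\},\qquad \mathcal T=\{x^ny^m: m,n\in\mathbb N,\ n-cm\in d\mathbb N,\ n\le\overline\Sigma_m\},$$ and let $A=\bigoplus_{\tau\in\mathcal T}R\tau$ and $\widetilde A=\bigoplus_{\tau\in\widetilde{\mathcal T}}R\tau$. Then $A$ and $\widetilde A$ are subrings of $\mathbb S$; $A$ is a strongly nicely essential subring of $\widetilde A$; and $\widetilde A$ is a special subextension of $\mathbb S$ regarded as the univariate Ore extension $R[x][y;\alpha]$ over $R[x]$ (with, for each $m$, attached data $\lambda_m=x^{cm}y^m$, $B_m=R[x^d]$ and $\alpha_{(m)}$ the restriction of $\alpha^m$ to $R[x^d]$).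
   Context: $\mathbb S$ is free as a left $R$-module on $\{x^ny^m:m,n\in\mathbb N\}$. A subring $A$ of a ring $B$ is nicely essential if for every finite set $E\subseteq B$ of non-zero elements there is $a\in A$ with $0\ne ax\in A$ for all $x\in E$; strongly nicely essential if moreover for every $z\in B$ there is $c\in A$ with $\{a\in A:ac=0\}=0$ and $cz\in A$. For $S=R[x]$ (free over $R$) and the Ore extension $S[y;\alpha]$: for a subring $A'\supseteq R$, $\operatorname{Deg}_y(A')=\{\deg_yf:0\ne f\in A'\}$, $d_{A'}=\gcd(\operatorname{Deg}_y(A')\setminus\{0\})$ if $A'\not\subseteq S$, else $0$; $A'$ is a special subextension if $A'=\sum_m(A'\cap Sy^m)$, $\operatorname{Deg}_y(A')=d_{A'}\mathbb N$, and for each $0\ne m\in\operatorname{Deg}_y(A')$ there exist $\lambda_m=\upsilon_my^m\in A'$ with $\upsilon_m$ regular in $S$, a subring $B_m$ with $R\subseteq B_m\subseteq A'\cap S$ and an automorphism $\alpha_{(m)}$ of $B_m$ such that $\deg_y(\lambda_mq-\alpha_{(m)}(q)\lambda_m)<m$ for all $q\in B_m$, and for every $q\in S$ with $qy^m\in A'$ some $u\in B_m$ regular in $S$ with $uqy^m\in B_m\lambda_m$. *)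

From HB Require Import structures.
From mathcomp Require Import all_boot all_order all_algebra.
Set Implicit Arguments. Unset Strict Implicit. Unset Printing Implicit Defensive.
Import Order.TTheory GRing.Theory Num.Theory.
Local Open Scope ring_scope.

(* Elements of the Ore extension  S = R[x][y; alpha]  are represented by their
   coefficient sequences in y:  f : {poly {poly R}}, where f`_m : {poly R} is the
   coefficient (in R[x]) of y^m (coefficients written on the LEFT of y^m),
   and (f`_m)`_n : R is the coefficient of x^n y^m.  The additive structure is
   that of {poly {poly R}}; the multiplication is the twisted one below. *)

Section Ore.
Variable R : nzRingType.
Variables (p e : nat).

Definition alphaX (q : {poly R}) : {poly R} := q \Po ('X + p%:R *: 'X^e).

(* Ore multiplication: (a y^i)(b y^j) = a alpha^i(b) y^(i+j) *)
Definition ore_mul (f g : {poly {poly R}}) : {poly {poly R}} :=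
  \sum_(i < size f) \sum_(j < size g)
     ((f`_i * iter i alphaX g`_j)%:P * 'X^(i + j)).

Definition ore_subring (A : {poly {poly R}} -> Prop) : Prop :=
  [/\ A 1,
      (forall f g, A f -> A g -> A (f - g)) &
      (forall f g, A f -> A g -> A (ore_mul f g))].

Definition nicely_essential (A B : {poly {poly R}} -> Prop) : Prop :=
  (forall f, A f -> B f) /\
  forall E : seq {poly {poly R}},
    (forall z, z \in E -> B z /\ z != 0) ->
    exists a, A a /\ forall z, z \in E -> ore_mul a z != 0 /\ A (ore_mul a z).

Definition strongly_nicely_essential (A B : {poly {poly R}} -> Prop) : Prop :=
  nicely_essential A B /\
  forall z, B z ->
    exists c, A c /\ (forall a, A a -> ore_mul a c = 0 -> a = 0)
              /\ A (ore_mul c z).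

Definition Deg_y (A : {poly {poly R}} -> Prop) (k : nat) : Prop :=
  exists f, A f /\ f != 0 /\ (size f).-1 = k.

(* d is the gcd (in the divisibility order of nat) of Deg_y(A) \ {0};
   this is 0 exactly when A is contained in S = R[x] *)
Definition is_dA (A : {poly {poly R}} -> Prop) (d : nat) : Prop :=
  (forall k, Deg_y A k -> k != 0%N -> (d %| k)%N) /\
  (forall g, (forall k, Deg_y A k -> k != 0%N -> (g %| k)%N) -> (g %| d)%N).

Definition regularS (u : {poly R}) : Prop :=
  forall q : {poly R}, (u * q = 0 -> q = 0) /\ (q * u = 0 -> q = 0).

Definition Rsubring (B : {poly R} -> Prop) : Prop :=
  [/\ forall a : R, B a%:P,
      (forall q q', B q -> B q' -> B (q - q')) &
      (forall q q', B q -> B q' -> B (q * q'))].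

Definition ring_aut_on (B : {poly R} -> Prop) (f : {poly R} -> {poly R}) : Prop :=
  (forall q, B q -> B (f q)) /\
  f 1 = 1 /\
  (forall q q', B q -> B q' -> f (q - q') = f q - f q') /\
  (forall q q', B q -> B q' -> f (q * q') = f q * f q') /\
  (forall q q', B q -> B q' -> f q = f q' -> q = q') /\
  (forall q, B q -> exists2 q', B q' & f q' = q).

Definition special_with (A : {poly {poly R}} -> Prop)
    (lam : nat -> {poly {poly R}}) (Bm : nat -> {poly R} -> Prop)
    (alm : nat -> {poly R} -> {poly R}) : Prop :=
  (* A = sum_m (A cap S y^m) *)
  (forall f m, A f -> A ((f`_m)%:P * 'X^m)) /\
  (exists d, is_dA A d /\ (forall k, Deg_y A k <-> (d %| k)%N)) /\
  (forall m, Deg_y A m -> m != 0%N ->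
     (exists u, lam m = u%:P * 'X^m /\ regularS u) /\
     A (lam m) /\
     (Rsubring (Bm m) /\ (forall q, Bm m q -> A q%:P)) /\
     ring_aut_on (Bm m) (alm m) /\
     (* deg_y (lam_m q - alpha_(m)(q) lam_m) < m ; size 0 = 0 handles q=0 *)
     (forall q, Bm m q ->
        (size (ore_mul (lam m) q%:P - ore_mul (alm m q)%:P (lam m))%R <= m)%N) /\
     (forall q : {poly R}, A (q%:P * 'X^m) ->
        exists u, Bm m u /\ regularS u /\
          exists2 b, Bm m b &
            ore_mul u%:P (q%:P * 'X^m) = ore_mul b%:P (lam m))).

Definition special_subextension (A : {poly {poly R}} -> Prop) : Prop :=
  exists lam Bm alm, special_with A lam Bm alm.

End Ore.

Definition Sigma (e m : nat) : nat := ((e ^ m - 1) %/ (e - 1))%N.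

Definition Sbar (e c r mu m : nat) : nat :=
  if (m <= mu)%N then (c * Sigma e m)%N
  else (c * ((m - mu) + Sigma e mu) + (m - mu) * r * (e - 1))%N.

Definition inTt (c d n m : nat) : bool := (n == c * m %[mod d])%N.

Definition inT (e c d r mu n m : nat) : bool :=
  [&& (c * m <= n)%N, (d %| n - c * m)%N & (n <= Sbar e c r mu m)%N].

Definition spanMon (R : nzRingType) (P : nat -> nat -> bool)
    (f : {poly {poly R}}) : Prop :=
  forall m n, (f`_m)`_n != 0 -> P n m.

Definition polyXd (R : nzRingType) (d : nat) (q : {poly R}) : Prop :=
  forall n, q`_n != 0 -> (d %| n)%N.

(* The substitution [alpha : x |-> x + p x^e] turns [x^n] into a sum of
   monomials [x^(n + k (e - 1))] with coefficient divisible by [p^k]; since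
   [p^(r + 1) = 0] only [k <= r] survive, and [m] iterations give
   [k <= Sigma_m n].  So [x^n1 y^m1 * x^n2 y^m2 = x^n1 alpha^m1(x^n2) y^(m1 + m2)]
   is supported on the [x^(n1 + n2 + k (e - 1)) y^(m1 + m2)] with
   [k <= min(r, Sigma_m1 n2)], and closure of [A] under products is the
   inequality [n1 + n2 + k (e - 1) <= Sbar_(m1 + m2)].  As [Sbar] eventually
   grows faster than [c m], a left factor [x^N y^M] with [M] large pushes any
   finite part of [At] into [A]; it is a non-zero-divisor because [alpha] fixes
   lowest-order terms.  Finally [lambda_m q = alpha^m(q) lambda_m] holds exactly,
   and [alpha^m] is onto [R[x^d]] because [alpha - 1] raises the [p]-adic
   valuation of coefficients. *)

From HB Require Import structures.
From mathcomp Require Import all_boot all_order all_algebra.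
From mathcomp Require Import zify ring.
Import Order.TTheory GRing.Theory Num.Theory.
Set Implicit Arguments.
Unset Strict Implicit.
Unset Printing Implicit Defensive.

Section Sigma.
Variable e : nat.
Hypothesis e_ge2 : 2 <= e.

Lemma Sigma0 : Sigma e 0 = 0.
Proof. by rewrite /Sigma expn0 subnn div0n. Qed.

Lemma Sigma_mul_sub1 m : Sigma e m * (e - 1) = e ^ m - 1.
Proof.
rewrite /Sigma divnK //; elim: m => [|m IH]; first by rewrite expn0 subnn dvdn0.
have -> : e ^ m.+1 - 1 = e ^ m - 1 + e ^ m * (e - 1).
  have : 0 < e ^ m by rewrite expn_gt0; lia.
  by rewrite expnS; nia.
by rewrite dvdn_add // dvdn_mull.
Qed.

Lemma expn_Sigma m : e ^ m = 1 + (e - 1) * Sigma e m.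
Proof.
have := Sigma_mul_sub1 m; have : 0 < e ^ m by rewrite expn_gt0; lia.
nia.
Qed.

Lemma SigmaS m : Sigma e m.+1 = 1 + e * Sigma e m.
Proof. have := expn_Sigma m.+1; rewrite expnS expn_Sigma; nia. Qed.

Lemma SigmaD a b : Sigma e (a + b) = Sigma e a + e ^ a * Sigma e b.
Proof.
elim: a => [|a IH]; first by rewrite Sigma0 expn0 add0n mul1n.
by rewrite addSn !SigmaS IH expnS; lia.
Qed.

Lemma leq_Sigma m : m <= Sigma e m.
Proof. by elim: m => [|m IH]; rewrite ?Sigma0 // SigmaS; nia. Qed.

Lemma leq_Sigma2 : {homo Sigma e : a b / a <= b}.
Proof. by move=> a b /subnKC <-; rewrite SigmaD; lia. Qed.

End Sigma.

Section Sbar.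
Variables e c r mu : nat.
Hypotheses (e_ge2 : 2 <= e) (c_gt0 : 0 < c) (mu_gt0 : 0 < mu)
  (r_ge : c * Sigma e mu.-1 <= r).
Local Notation Sb := (Sbar e c r mu).
Local Notation D := (c + r * (e - 1)).

Lemma Sbar_small m : m <= mu -> Sb m = c * Sigma e m.
Proof. by rewrite /Sbar => ->. Qed.

Lemma Sbar_large m : mu <= m -> Sb m = c * Sigma e mu + (m - mu) * D.
Proof.
move=> mu_m; rewrite /Sbar; case: leqP => [m_le|_]; last by ring.
by rewrite (_ : m = mu) ?subnn ?addn0; lia.
Qed.

Lemma Sbar0 : Sb 0 = 0.
Proof. by rewrite Sbar_small // Sigma0 muln0. Qed.

Lemma leq_Sbar : {homo Sb : a b / a <= b}.
Proof.
suff Sb_succ m : Sb m <= Sb m.+1.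
  move=> a b /subnKC <-; elim: (b - a) => [|k IH]; first by rewrite addn0.
  by rewrite addnS (leq_trans IH).
case: (leqP mu m) => mu_m.
  by rewrite !Sbar_large ?leq_add2l ?leq_mul2r; lia.
by rewrite !Sbar_small 1?leq_mul ?leq_Sigma2 //; lia.
Qed.

Lemma Sbar_large_ge m : mu <= m -> c * m + (m - mu) * r * (e - 1) <= Sb m.
Proof. by move=> mu_m; rewrite Sbar_large //; have := leq_Sigma e_ge2 mu; nia. Qed.

Lemma cSigma_mu_le : c * Sigma e mu <= mu * c + (mu - 1) * r * (e - 1).
Proof.
have mu_eq : mu = mu.-1.+1 by lia.
rewrite {1}mu_eq SigmaS //; move: r_ge; set s := Sigma e mu.-1 => cs_le_r.
case: (ltngtP mu 2) => [mu_lt2|mu_gt2|mu2].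
- have s0 : s = 0 by rewrite /s (_ : mu.-1 = 0); [exact: Sigma0|lia].
  by rewrite s0; nia.
- have : r <= (mu - 2) * r * (e - 1) by have : 1 <= (mu - 2) * (e - 1); nia.
  have : (e - 1) * (c * s) <= (e - 1) * r by rewrite leq_mul.
  have -> : c * (1 + e * s) = c + c * s + (e - 1) * (c * s).
    by rewrite -[in LHS](subnK (ltnW e_ge2)); ring.
  have -> : (mu - 1) * r * (e - 1) = (e - 1) * r + (mu - 2) * r * (e - 1).
    by rewrite (_ : mu - 1 = 1 + (mu - 2)); [ring | lia].
  have : c <= mu * c by rewrite leq_pmull; lia.
  lia.
- by move: cs_le_r; rewrite /s mu2 (SigmaS e_ge2 0) Sigma0; nia.
Qed.

Lemma c_expn_le i : i < mu -> c * e ^ i <= D.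
Proof.
move=> lt_i_mu; have := expn_Sigma e_ge2 mu.-1.
have : e ^ i <= e ^ mu.-1 by apply: leq_pexp2l; lia.
nia.
Qed.

Lemma Sbar_le_linear m : 0 < m -> Sb m <= c + (m - 1) * D.
Proof.
move=> m_gt0; case: (leqP mu m) => [mu_m|lt_m_mu].
  by rewrite Sbar_large //; have := cSigma_mu_le; nia.
rewrite Sbar_small; last lia.
elim: m m_gt0 lt_m_mu => [//|m IH] _ lt_m_mu.
case: (posnP m) => [->|m_gt0]; first by rewrite SigmaS // Sigma0; lia.
have -> : Sigma e m.+1 = Sigma e m + e ^ m.
  by rewrite -addn1 SigmaD // SigmaS // Sigma0; lia.
have := IH m_gt0 (ltnW lt_m_mu); have := c_expn_le (ltnW lt_m_mu).
nia.
Qed.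

Lemma Sbar_superadditive m1 m2 : 0 < m1 -> 0 < m2 -> mu < m1 + m2 ->
  Sb m1 + Sb m2 + r * (e - 1) <= Sb (m1 + m2).
Proof.
wlog m12 : m1 m2 / m1 <= m2.
  move=> H m1_gt0 m2_gt0 lt_mu; case: (leqP m1 m2) => [m12|m21]; first exact: H.
  by rewrite (addnC m1) (addnC (Sb m1)); apply: H; lia.
move=> m1_gt0 m2_gt0 lt_mu; rewrite (@Sbar_large (m1 + m2)); last lia.
case: (leqP mu m2) => [mu_m2|lt_m2_mu].
  by rewrite (Sbar_large mu_m2); have := Sbar_le_linear m1_gt0; nia.
rewrite !Sbar_small; [|lia|lia].
set j := m1 + m2 - mu; set a := mu - m2.
have Sigma_a : 1 <= Sigma e a by have := leq_Sigma e_ge2 a; lia.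
have E1 := SigmaD e_ge2 a j; rewrite (_ : a + j = m1) in E1; last lia.
have E2 := SigmaD e_ge2 m2 a; rewrite (_ : m2 + a = mu) in E2; last lia.
have Sigma_m12 : Sigma e m1 + Sigma e m2 <= Sigma e mu.
  have : Sigma e m1 <= Sigma e m2 by apply: leq_Sigma2.
  have := expn_Sigma e_ge2 m2; have : 0 < e ^ m2 by rewrite expn_gt0; lia.
  rewrite E1 E2; nia.
have : 1 <= j by lia.
nia.
Qed.

(* [n1 + n2 + k (e - 1)] is the x-degree of a monomial of
   [x^n1 y^m1 * x^n2 y^m2 = x^n1 alpha^m1(x^n2) y^(m1 + m2)]. *)
Lemma Sbar_product_bound n1 m1 n2 m2 k :
  n1 <= Sb m1 -> n2 <= Sb m2 -> k <= r -> k <= Sigma e m1 * n2 ->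
  n1 + n2 + k * (e - 1) <= Sb (m1 + m2).
Proof.
move=> n1_le n2_le k_le_r k_le.
case: (posnP m2) => [m20|m2_gt0].
  move: n2_le k_le; rewrite m20 Sbar0 addn0 leqn0 => /eqP ->.
  by rewrite muln0 leqn0 => /eqP ->; rewrite !addn0.
case: (posnP m1) => [m10|m1_gt0].
  move: n1_le k_le; rewrite m10 Sbar0 Sigma0 leqn0 => /eqP ->.
  by rewrite leqn0 => /eqP ->; rewrite !add0n addn0.
case: (leqP (m1 + m2) mu) => [le_mu|lt_mu].
  rewrite !Sbar_small in n1_le n2_le *; [|lia|lia|lia].
  rewrite SigmaD // expn_Sigma //.
  have : k * (e - 1) <= Sigma e m1 * n2 * (e - 1) by rewrite leq_mul.
  have : Sigma e m1 * n2 * (e - 1) <= Sigma e m1 * (c * Sigma e m2) * (e - 1).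
    by rewrite !leq_mul.
  nia.
have := Sbar_superadditive m1_gt0 m2_gt0 lt_mu.
have : k * (e - 1) <= r * (e - 1) by rewrite leq_mul.
lia.
Qed.

End Sbar.

Local Open Scope ring_scope.

Lemma sumr_neq0_exists (V : zmodType) n (F : 'I_n -> V) :
  \sum_(i < n) F i != 0 -> exists i, F i != 0.
Proof.
case: (pickP (fun i => F i != 0)) => [i Fi _|F0]; first by exists i.
by rewrite big1 ?eqxx // => i _; apply/eqP/negbFE/F0.
Qed.

Lemma sumr_ord_delta (V : zmodType) n j (x : V) :
  \sum_(i < n) (if i == j :> nat then x else 0) = if (j < n)%N then x else 0.
Proof. by rewrite -big_mkcond /= (big_ord1_eq _ (fun=> x)). Qed.

Lemma sumr_ord_widen (V : zmodType) (F : nat -> V) n N : (n <= N)%N ->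
  (forall i, (n <= i)%N -> F i = 0) -> \sum_(i < n) F i = \sum_(i < N) F i.
Proof.
move=> le_nN F0; rewrite -(subnKC le_nN) big_split_ord /= [X in _ + X]big1 ?addr0 //.
by move=> i _; rewrite F0 // leq_addr.
Qed.

Section IterRMorphism.
Variable R : nzRingType.
Variable f : {rmorphism R -> R}.

Fact iter_is_zmod_morphism m : zmod_morphism (iter m f).
Proof. by elim: m => [//|m IH] x y; rewrite iterS IH rmorphB. Qed.

Fact iter_is_monoid_morphism m : monoid_morphism (iter m f).
Proof.
by elim: m => [//|m [IH1 IH2]]; split => [|x y]; rewrite iterS ?IH1 ?IH2 ?rmorph1 ?rmorphM.
Qed.

HB.instance Definition _ m :=
  GRing.isZmodMorphism.Build R R (iter m f) (iter_is_zmod_morphism m).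
HB.instance Definition _ m :=
  GRing.isMonoidMorphism.Build R R (iter m f) (iter_is_monoid_morphism m).

End IterRMorphism.

Section Substitution.
Variable R : nzRingType.
Variables p e : nat.
Hypothesis e_ge2 : (2 <= e)%N.

Local Notation xi := ('X + p%:R *: 'X^e : {poly R}).
Local Notation alpha := (@alphaX R p e).

Lemma xiE : xi = 'X + p%:R * 'X^e.
Proof. by rewrite -mul_polyC polyC_natr. Qed.

Lemma commr_polyC_xi : commr_rmorph polyC xi.
Proof.
move=> a; rewrite /GRing.comm xiE mulrDl mulrDr -commr_polyX; congr (_ + _).
by rewrite -mulrA -commr_polyXn !mulrA -commr_nat.
Qed.

HB.instance Definition _ :=
  GRing.RMorphism.copy alpha (horner_morph commr_polyC_xi).

Lemma iter_alphaC m (a : R) : iter m alpha a%:P = a%:P.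
Proof. by elim: m => //= m ->; rewrite /alphaX comp_polyC. Qed.

Lemma iter_alphaZ m (a : R) q : iter m alpha (a *: q) = a *: iter m alpha q.
Proof. by rewrite -!mul_polyC rmorphM /= iter_alphaC. Qed.

Lemma coef_iter_alpha m (q : {poly R}) b :
  (iter m alpha q)`_b = \sum_(i < size q) q`_i * (iter m alpha 'X^i)`_b.
Proof.
rewrite -{1}[q]coefK poly_def rmorph_sum coef_sum; apply: eq_bigr => i _ /=.
by rewrite iter_alphaZ coefZ.
Qed.

End Substitution.

Section PAdicSupport.
Variable R : nzRingType.
Variables p e : nat.
Hypothesis e_ge2 : (2 <= e)%N.

Local Notation xi := ('X + p%:R *: 'X^e : {poly R}).
Local Notation alpha := (@alphaX R p e).

Definition pdvd k (a : R) := exists s, a = (p ^ k)%:R * s.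

Lemma pdvd0 k : pdvd k 0.
Proof. by exists 0; rewrite mulr0. Qed.

Lemma pdvd_trivial a : pdvd 0 a.
Proof. by exists a; rewrite mul1r. Qed.

Lemma pdvdD k a b : pdvd k a -> pdvd k b -> pdvd k (a + b).
Proof. by move=> [s ->] [t ->]; exists (s + t); rewrite mulrDr. Qed.

Lemma pdvdN k a : pdvd k a -> pdvd k (- a).
Proof. by move=> [s ->]; exists (- s); rewrite mulrN. Qed.

Lemma pdvdM j k a b : pdvd j a -> pdvd k b -> pdvd (j + k) (a * b).
Proof.
move=> [s ->] [t ->]; exists (s * t).
by rewrite expnD natrM -!mulrA; congr (_ * _); rewrite mulrA commr_nat -mulrA.
Qed.

Lemma pdvdW j k a : (j <= k)%N -> pdvd k a -> pdvd j a.
Proof.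
move=> le_jk [s ->]; exists ((p ^ (k - j))%:R * s).
by rewrite mulrA -natrM -expnD subnKC.
Qed.

(* The shape of [alpha(x^n)]: each factor [p x^e] of a monomial of
   [(x + p x^e)^n] raises the degree by [e - 1] and contributes a factor [p]. *)
Definition ptail n K (h : {poly R}) := forall b, h`_b != 0 ->
  exists k, [/\ b = (n + k * (e - 1))%N, (k <= K)%N & pdvd k h`_b].

Lemma ptail0 n K : ptail n K 0.
Proof. by move=> b; rewrite coef0 eqxx. Qed.

Lemma ptailD n K h h' : ptail n K h -> ptail n K h' -> ptail n K (h + h').
Proof.
move=> tl_h tl_h' b; rewrite coefD => hh'_b.
have [hb0|hb] := eqVneq h`_b 0.
  by move: hh'_b; rewrite hb0 add0r => /tl_h' [k [-> le_kK pk]]; exists k.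
have [k [b_eq le_kK pk]] := tl_h _ hb; exists k; split => //.
have [->|h'b] := eqVneq h'`_b 0; first by rewrite addr0.
have [k' [b_eq' _ pk']] := tl_h' _ h'b.
suff k'k : k' = k by apply: pdvdD => //; rewrite -k'k.
by apply/eqP; rewrite -(eqn_pmul2r (_ : 0 < e - 1)%N); [apply/eqP|]; lia.
Qed.

Lemma ptail_sum n K m (F : 'I_m -> {poly R}) :
  (forall i, ptail n K (F i)) -> ptail n K (\sum_(i < m) F i).
Proof. by move=> tl_F; elim/big_rec: _ => [|i h _]; [apply: ptail0 | apply: ptailD]. Qed.

Lemma ptailZ n b j K a g : pdvd j a -> ptail b K g -> b = (n + j * (e - 1))%N ->
  ptail n (j + K) (a *: g).
Proof.
move=> pa tl_g b_eq b'; rewrite coefZ => ag_b'.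
have gb' : g`_b' != 0 by apply: contraNneq ag_b' => ->; rewrite mulr0.
have [k [b'_eq le_kK pk]] := tl_g _ gb'.
by exists (j + k)%N; split; [lia | lia | apply: pdvdM].
Qed.

Lemma ptailXn n : ptail n 0 'X^n.
Proof.
move=> b; rewrite coefXn; have [->|//] := eqVneq b n; last by rewrite eqxx.
by exists 0%N; split; rewrite ?mul0n ?addn0 //; apply: pdvd_trivial.
Qed.

Lemma ptail_mul_xi b K g : ptail b K g -> ptail b.+1 K.+1 (g * xi).
Proof.
move=> tl_g; rewrite xiE mulrDr; apply: ptailD => b'.
  rewrite coefMX; have [//|b'_gt0 /= gb'] := eqVneq b' 0%N; first by rewrite eqxx.
  by have [k [b'_eq le_kK pk]] := tl_g _ gb'; exists k; split => //; lia.
rewrite -polyC_natr mulrA coefMXn; case: ltnP => [_|le_eb']; first by rewrite eqxx.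
rewrite coefMC => gpb.
have gb : g`_(b' - e) != 0 by apply: contraNneq gpb => ->; rewrite mul0r.
have [k [b_eq le_kK pk]] := tl_g _ gb.
exists k.+1; split; [lia | by [] |].
by rewrite -addn1; apply: pdvdM => //; exists 1; rewrite expn1 mulr1.
Qed.

Lemma ptail_xi_exp n : ptail n n (xi ^+ n).
Proof. by elim: n => [|n IH]; [apply: ptailXn | rewrite exprSr; apply: ptail_mul_xi]. Qed.

Lemma ptail_alpha n K h : ptail n K h -> ptail n (n + K * e) (alpha h).
Proof.
move=> tl_h; rewrite /alphaX comp_polyE; apply: ptail_sum => i.
have [->|hi] := eqVneq h`_i 0; first by rewrite scale0r; apply: ptail0.
have [k [i_eq le_kK pk]] := tl_h _ hi.
move=> b /(ptailZ pk (ptail_xi_exp (n := i)) i_eq) [k' [b_eq le_k' pk']].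
by exists k'; split => //; rewrite i_eq in le_k'; nia.
Qed.

Lemma ptail_iter_alpha m n : ptail n (Sigma e m * n) (iter m alpha 'X^n).
Proof.
elim: m => [|m IH]; first by rewrite Sigma0 mul0n; apply: ptailXn.
move=> b /= /(ptail_alpha IH) [k [b_eq le_k pk]].
by exists k; split => //; rewrite SigmaS //; nia.
Qed.

Section Characteristic.
Variable r : nat.
Hypothesis charR : forall n : nat, (n%:R == 0 :> R) = (p ^ r.+1 %| n)%N.

Lemma pdvd_eq0 k a : (r < k)%N -> pdvd k a -> a = 0.
Proof.
move=> lt_rk [s ->]; suff /eqP -> : (p ^ k)%:R == 0 :> R by rewrite mul0r.
by rewrite charR dvdn_exp2l.
Qed.

Lemma pdvd_neq0_leq k a : pdvd k a -> a != 0 -> (k <= r)%N.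
Proof. by move=> pa; apply: contraR; rewrite -ltnNge => lt_rk; rewrite (pdvd_eq0 lt_rk pa). Qed.

Lemma coef_iter_alpha_support m (q : {poly R}) b : (iter m alpha q)`_b != 0 ->
  exists n k, [/\ q`_n != 0, b = (n + k * (e - 1))%N, (k <= r)%N
                & (k <= Sigma e m * n)%N].
Proof.
rewrite coef_iter_alpha => /sumr_neq0_exists [i qi_alpha].
have qi : q`_i != 0 by apply: contraNneq qi_alpha => ->; rewrite mul0r.
have alpha_b : (iter m alpha 'X^i)`_b != 0.
  by apply: contraNneq qi_alpha => ->; rewrite mulr0.
have [k [b_eq le_k pk]] := ptail_iter_alpha alpha_b.
by exists i, k; split => //; apply: pdvd_neq0_leq pk alpha_b.
Qed.

End Characteristic.
End PAdicSupport.

Section LowestCoef.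
Variable R : nzRingType.

Lemma exists_lowest (h : {poly R}) : h != 0 ->
  exists j, h`_j != 0 /\ forall i, (i < j)%N -> h`_i = 0.
Proof.
move=> h_neq0; have ex_j : exists j, h`_j != 0.
  by exists (size h).-1; rewrite -lead_coefE lead_coef_eq0.
case: (ex_minnP ex_j) => j hj j_min; exists j; split => // i lt_ij.
by apply/eqP; apply: contraT => /j_min; lia.
Qed.

Lemma rreg_lowest_coef1 (h : {poly R}) N :
  (forall i, (i < N)%N -> h`_i = 0) -> h`_N = 1 -> GRing.rreg h.
Proof.
move=> h_low hN a b ab; have ch0 : (a - b) * h = 0 by rewrite mulrBl ab subrr.
apply/eqP; rewrite -subr_eq0; move: ch0; set c := a - b => ch0.
apply/negPn/negP => /exists_lowest [j [cj c_low]].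
suff : (c * h)`_(j + N) = c`_j by rewrite ch0 coef0 => /esym/eqP; rewrite (negPf cj).
rewrite coefM (eq_bigr (fun i : 'I_(j + N).+1 => if i == j :> nat then c`_j else 0)).
  by rewrite sumr_ord_delta ltnS leq_addr.
move=> i _; case: (ltngtP i j) => [lt_ij|lt_ji|->].
- by rewrite c_low // mul0r.
- by rewrite h_low ?mulr0 //; have := ltn_ord i; lia.
- by rewrite addKn hN mulr1.
Qed.

End LowestCoef.

Section LowestTerm.
Variable R : nzRingType.
Variables p e : nat.
Hypothesis e_ge2 : (2 <= e)%N.

Local Notation xi := ('X + p%:R *: 'X^e : {poly R}).
Local Notation alpha := (@alphaX R p e).

Lemma coef_xi_exp_lt i t : (t < i)%N -> (xi ^+ i)`_t = 0.
Proof.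
move=> lt_ti; apply/eqP; apply: contraTT lt_ti => /(ptail_xi_exp e_ge2) [k [-> _ _]].
by rewrite -leqNgt leq_addr.
Qed.

Lemma coef_xi_exp_diag i : (xi ^+ i)`_i = 1.
Proof.
elim: i => [|i IH]; first by rewrite expr0 coef1.
rewrite exprSr {2}xiE mulrDr coefD coefMX /= IH -polyC_natr mulrA coefMXn.
case: ltnP => [_|le_ei]; first by rewrite addr0.
by rewrite coefMC coef_xi_exp_lt ?mul0r ?addr0 //; lia.
Qed.

Lemma alpha_lowest (q : {poly R}) j : (forall i, (i < j)%N -> q`_i = 0) ->
  (forall i, (i < j)%N -> (alpha q)`_i = 0) /\ (alpha q)`_j = q`_j.
Proof.
move=> q_low.
have coef_alpha t : (t <= j)%N ->
    (alpha q)`_t = \sum_(i < size q) (if i == t :> nat then q`_t else 0).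
  move=> le_tj; rewrite /alphaX comp_polyE coef_sum; apply: eq_bigr => i _.
  rewrite coefZ; case: (ltngtP i t) => [lt_it|lt_ti|->].
  - by rewrite q_low ?mul0r //; apply: leq_trans lt_it le_tj.
  - by rewrite coef_xi_exp_lt // mulr0.
  - by rewrite coef_xi_exp_diag mulr1.
split=> [i lt_ij|]; last first.
  by rewrite coef_alpha // sumr_ord_delta; case: ltnP => // /(nth_default 0).
rewrite coef_alpha ?sumr_ord_delta; last exact: ltnW.
by case: ifP => // _; rewrite q_low.
Qed.

Lemma iter_alpha_lowest m (q : {poly R}) j : (forall i, (i < j)%N -> q`_i = 0) ->
  (forall i, (i < j)%N -> (iter m alpha q)`_i = 0) /\ (iter m alpha q)`_j = q`_j.
Proof.
move=> q_low; elim: m => [//|m [IH_low IH_j]] /=.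
by have [alpha_low ->] := alpha_lowest IH_low; split.
Qed.

Lemma iter_alpha_eq0 m (h : {poly R}) : (iter m alpha h == 0) = (h == 0).
Proof.
apply/idP/idP => [|/eqP ->]; last by rewrite rmorph0.
apply: contraLR => /exists_lowest [j [hj h_low]].
have [_ iter_j] := iter_alpha_lowest m h_low.
by apply: contraNneq hj => iter0; rewrite -iter_j iter0 coef0.
Qed.

Lemma iter_alpha_inj m : injective (iter m alpha).
Proof. by move=> q q' /eqP; rewrite -subr_eq0 -rmorphB iter_alpha_eq0 subr_eq0 => /eqP. Qed.

End LowestTerm.

Section PolyXd.
Variables (R : nzRingType) (d : nat).

Lemma polyXdD (q q' : {poly R}) : polyXd d q -> polyXd d q' -> polyXd d (q + q').
Proof.
move=> Xd_q Xd_q' n; rewrite coefD; have [qn0|/Xd_q //] := eqVneq q`_n 0.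
by rewrite qn0 add0r => /Xd_q'.
Qed.

Lemma polyXdN (q : {poly R}) : polyXd d q -> polyXd d (- q).
Proof. by move=> Xd_q n; rewrite coefN oppr_eq0 => /Xd_q. Qed.

Lemma polyXdB (q q' : {poly R}) : polyXd d q -> polyXd d q' -> polyXd d (q - q').
Proof. by move=> Xd_q /polyXdN; apply: polyXdD. Qed.

Lemma polyXd_Rsubring : Rsubring (polyXd (R := R) d).
Proof.
split=> [a n|q q'|q q' Xd_q Xd_q' n].
- by rewrite coefC; case: (n =P 0%N) => [->|_] //; rewrite eqxx.
- exact: polyXdB.
rewrite coefM => /sumr_neq0_exists [i qq'_n].
have /Xd_q d_i : q`_i != 0 by apply: contraNneq qq'_n => ->; rewrite mul0r.
have /Xd_q' d_ni : q'`_(n - i) != 0 by apply: contraNneq qq'_n => ->; rewrite mulr0.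
by rewrite -(subnKC (_ : i <= n)%N) ?dvdn_add // -ltnS.
Qed.

End PolyXd.

Section AlphaOnPolyXd.
Variable R : nzRingType.
Variables p e r d : nat.
Hypotheses (e_ge2 : (2 <= e)%N) (d_dvd : (d %| e - 1)%N).
Hypothesis charR : forall n : nat, (n%:R == 0 :> R) = (p ^ r.+1 %| n)%N.

Local Notation xi := ('X + p%:R *: 'X^e : {poly R}).
Local Notation alpha := (@alphaX R p e).

Lemma polyXd_iter_alpha m (q : {poly R}) : polyXd d q -> polyXd d (iter m alpha q).
Proof.
move=> Xd_q b /(coef_iter_alpha_support e_ge2 charR) [n [k [/Xd_q d_n -> _ _]]].
by rewrite dvdn_add // dvdn_mull.
Qed.

Definition pdvdp j (q : {poly R}) := forall b, pdvd p j q`_b.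

Lemma pdvd_coef_Xn_sub_xi_exp i b : pdvd p 1 (('X^i - xi ^+ i)`_b).
Proof.
rewrite coefB coefXn; have [->|b_neq_i] := eqVneq b i.
  by rewrite coef_xi_exp_diag // subrr; apply: pdvd0.
rewrite sub0r; apply: pdvdN; have [->|xib] := eqVneq (xi ^+ i)`_b 0.
  exact: pdvd0.
have [k [b_eq _ pk]] := ptail_xi_exp e_ge2 xib.
apply: pdvdW pk; case: k b_eq => [|k] // b_eq.
by move: b_neq_i; rewrite b_eq mul0n addn0 eqxx.
Qed.

(* [q - alpha q] is a combination of the [x^i - xi^i], which are divisible by [p]. *)
Lemma pdvdp_sub_alpha j q : pdvdp j q -> pdvdp j.+1 (q - alpha q).
Proof.
move=> pq b; have -> : q - alpha q = \sum_(i < size q) q`_i *: ('X^i - xi ^+ i).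
  rewrite /alphaX comp_polyE {1}(_ : q = \sum_(i < size q) q`_i *: 'X^i).
    by rewrite -sumrB; apply: eq_bigr => i _; rewrite scalerBr.
  by rewrite -poly_def coefK.
rewrite coef_sum; elim/big_rec: _ => [|i a _ pa]; first exact: pdvd0.
apply: pdvdD => //; rewrite coefZ -addn1; apply: pdvdM; first exact: pq.
exact: pdvd_coef_Xn_sub_xi_exp.
Qed.

(* [q = alpha (q + (q - alpha q) + ...)], the series stopping since [p^(r + 1) = 0]. *)
Lemma alpha_onto_pdvdp t j (q : {poly R}) : (r < j + t)%N ->
  polyXd d q -> pdvdp j q -> exists2 q', polyXd d q' & alpha q' = q.
Proof.
elim: t j q => [|t IH] j q lt_r Xd_q pq.
  rewrite addn0 in lt_r.
  have -> : q = 0 by apply/polyP => b; rewrite coef0 (pdvd_eq0 charR lt_r (pq b)).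
  by exists 0; [move=> n; rewrite coef0 eqxx | rewrite rmorph0].
have Xd_sub : polyXd d (q - alpha q).
  by apply: polyXdB => //; apply: (polyXd_iter_alpha (m := 1)).
have lt_r' : (r < j.+1 + t)%N by rewrite addSnnS.
have [q' Xd_q' alpha_q'] := IH j.+1 _ lt_r' Xd_sub (pdvdp_sub_alpha pq).
by exists (q + q'); [apply: polyXdD | rewrite rmorphD /= alpha_q' addrC subrK].
Qed.

Lemma iter_alpha_onto_polyXd m (q : {poly R}) : polyXd d q ->
  exists2 q', polyXd d q' & iter m alpha q' = q.
Proof.
elim: m q => [|m IH] q Xd_q; first by exists q.
have [q1 Xd_q1 <-] := alpha_onto_pdvdp (t := r.+1) (j := 0) (leqnn _) Xd_q
  (fun b => pdvd_trivial _ _).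
by have [q2 Xd_q2 <-] := IH q1 Xd_q1; exists q2.
Qed.

End AlphaOnPolyXd.

Section OreProduct.
Variable R : nzRingType.
Variables p e : nat.

Local Notation alpha := (@alphaX R p e).
Local Notation ore_mul := (@ore_mul R p e).

Lemma coef_ore_mul_widen (f g : {poly {poly R}}) m N M :
  (size f <= N)%N -> (size g <= M)%N ->
  (ore_mul f g)`_m = \sum_(i < N) \sum_(j < M)
    (if (i + j == m)%N then f`_i * iter i alpha g`_j else 0).
Proof.
move=> le_fN le_gM.
pose T i j := if (i + j == m)%N then f`_i * iter i alpha g`_j else 0.
have -> : (ore_mul f g)`_m = \sum_(i < size f) \sum_(j < size g) T i j.
  rewrite coef_sum; apply: eq_bigr => i _; rewrite coef_sum; apply: eq_bigr => j _.
  by rewrite coefCM coefXn mulr_natr mulrb eq_sym.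
rewrite (sumr_ord_widen (F := fun i => \sum_(j < size g) T i j) le_fN); last first.
  by move=> i le_fi; apply: big1 => j _; rewrite /T nth_default // mul0r if_same.
apply: eq_bigr => i _; apply: (sumr_ord_widen (F := T i) le_gM) => j le_gj.
by rewrite /T (nth_default _ le_gj) rmorph0 mulr0 if_same.
Qed.

Lemma size_monomial (a : {poly R}) i : (size (a%:P * 'X^i)%R <= i.+1)%N.
Proof. by rewrite mul_polyC (leq_trans (size_scale_leq _ _)) // size_polyXn. Qed.

Lemma coef_monomial (a : {poly R}) i m :
  (a%:P * 'X^i : {poly {poly R}})`_m = if m == i then a else 0.
Proof. by rewrite coefCM coefXn; case: eqP; rewrite ?mulr1 ?mulr0. Qed.

Lemma coef_ore_mul_monomial_l (a : {poly R}) i (g : {poly {poly R}}) m :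
  (ore_mul (a%:P * 'X^i) g)`_m =
    if (i <= m)%N then a * iter i alpha g`_(m - i) else 0.
Proof.
rewrite (coef_ore_mul_widen _ (size_monomial a i) (leqnn (size g))).
under eq_bigr => k _ do rewrite coef_monomial.
rewrite (eq_bigr (fun k : 'I_i.+1 => if k == i :> nat then
   \sum_(j < size g) (if (i + j == m)%N then a * iter i alpha g`_j else 0) else 0)).
  rewrite sumr_ord_delta ltnSn; case: leqP => [le_im|lt_mi]; last first.
    by rewrite big1 // => j _; case: eqP => //; lia.
  rewrite (eq_bigr (fun j : 'I_(size g) =>
      if j == (m - i)%N :> nat then a * iter i alpha g`_(m - i) else 0)).
    by rewrite sumr_ord_delta; case: ltnP => // /(nth_default 0) ->; rewrite rmorph0 mulr0.
  move=> j _; have [->|ne_j] := eqVneq (j : nat) (m - i)%N.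
    by rewrite subnKC // eqxx.
  by case: eqP => //; lia.
move=> k _; case: eqP => [->|_] //.
by apply: big1 => j _; rewrite mul0r if_same.
Qed.

Lemma coef_ore_mul_monomial_r (f : {poly {poly R}}) (b : {poly R}) j m :
  (ore_mul f (b%:P * 'X^j))`_m =
    if (j <= m)%N then f`_(m - j) * iter (m - j) alpha b else 0.
Proof.
rewrite (coef_ore_mul_widen _ (leqnn (size f)) (size_monomial b j)).
under eq_bigr => i _ do under eq_bigr => k _ do rewrite coef_monomial.
rewrite (eq_bigr (fun i : 'I_(size f) => if i == (m - j)%N :> nat then
     (if (j <= m)%N then f`_(m - j) * iter (m - j) alpha b else 0) else 0)).
  rewrite sumr_ord_delta; case: ltnP => // /(nth_default 0) ->.
  by rewrite mul0r if_same.
move=> i _; rewrite (eq_bigr (fun k : 'I_j.+1 => if k == j :> nat then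
    (if (i + j == m)%N then f`_i * iter i alpha b else 0) else 0)).
  rewrite sumr_ord_delta ltnSn; have [->|ne_i] := eqVneq (i : nat) (m - j)%N.
    by case: leqP => [le_jm|lt_mj]; [rewrite subnK // eqxx | case: eqP => //; lia].
  by case: eqP => //; lia.
move=> k _; have [->|_] //= := eqVneq (k : nat) j.
by rewrite rmorph0 mulr0 if_same.
Qed.

Lemma coef_ore_mulC_l (a : {poly R}) (g : {poly {poly R}}) m :
  (ore_mul a%:P g)`_m = a * g`_m.
Proof. by have := coef_ore_mul_monomial_l a 0 g m; rewrite expr0 mulr1 subn0. Qed.

Section Characteristic.
Variable r : nat.
Hypothesis e_ge2 : (2 <= e)%N.
Hypothesis charR : forall n : nat, (n%:R == 0 :> R) = (p ^ r.+1 %| n)%N.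

Lemma coef_ore_mul_support (f g : {poly {poly R}}) m N :
  ((ore_mul f g)`_m)`_N != 0 ->
  exists i j a n k, [/\ m = (i + j)%N, (f`_i)`_a != 0, (g`_j)`_n != 0,
    N = (a + n + k * (e - 1))%N & (k <= r)%N /\ (k <= Sigma e i * n)%N].
Proof.
rewrite (coef_ore_mul_widen _ (leqnn _) (leqnn _)) coef_sum.
move=> /sumr_neq0_exists [i]; rewrite coef_sum => /sumr_neq0_exists [j].
case: ifP => [/eqP m_eq|_]; last by rewrite coef0 eqxx.
rewrite coefM => /sumr_neq0_exists [a fa_alpha].
have fa : (f`_i)`_a != 0 by apply: contraNneq fa_alpha => ->; rewrite mul0r.
have /(coef_iter_alpha_support e_ge2 charR) : (iter i alpha g`_j)`_(N - a) != 0.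
  by apply: contraNneq fa_alpha => ->; rewrite mulr0.
move=> [n [k [gn N_eq le_kr le_k]]].
by exists i, j, a, n, k; split => //; have := ltn_ord a; lia.
Qed.

End Characteristic.
End OreProduct.

Section MonomialSpans.
Variable R : nzRingType.
Variables p e r : nat.
Hypothesis e_ge2 : (2 <= e)%N.
Hypothesis charR : forall n : nat, (n%:R == 0 :> R) = (p ^ r.+1 %| n)%N.

Local Notation ore_mul := (@ore_mul R p e).

(* Closure of a set of monomials [x^n y^m] under the supports of products. *)
Definition ore_closed (P : nat -> nat -> bool) := forall n1 m1 n2 m2 k,
  P n1 m1 -> P n2 m2 -> (k <= r)%N -> (k <= Sigma e m1 * n2)%N ->
  P (n1 + n2 + k * (e - 1))%N (m1 + m2)%N.

Lemma spanMon_ore_mul (P : nat -> nat -> bool) f g : ore_closed P ->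
  spanMon P f -> spanMon P g -> spanMon P (ore_mul f g).
Proof.
move=> closedP Pf Pg m N /(coef_ore_mul_support e_ge2 charR).
by move=> [i [j [a [n [k [-> /Pf Pa /Pg Pn -> [le_kr le_k]]]]]]]; apply: closedP.
Qed.

Lemma spanMonB (P : nat -> nat -> bool) f g :
  spanMon (R := R) P f -> spanMon P g -> spanMon P (f - g).
Proof.
move=> Pf Pg m n; rewrite !coefB; have [fmn0|/Pf //] := eqVneq (f`_m)`_n 0.
by rewrite fmn0 sub0r oppr_eq0 => /Pg.
Qed.

Lemma ore_subring_spanMon (P : nat -> nat -> bool) :
  P 0%N 0%N -> ore_closed P -> ore_subring p e (spanMon (R := R) P).
Proof.
move=> P00 closedP; split=> [m n|f g|f g]; [|exact: spanMonB|exact: spanMon_ore_mul].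
rewrite coef1; have [->|_] /= := eqVneq m 0%N; last by rewrite coef0 eqxx.
by rewrite coef1; have [->|_] //= := eqVneq n 0%N; rewrite eqxx.
Qed.

Lemma exists_support_bound (E : seq {poly {poly R}}) : exists B, forall z, z \in E ->
  forall m n, (z`_m)`_n != 0 -> (m < B)%N /\ (n < B)%N.
Proof.
elim: E => [|z E [B IH]]; first by exists 0%N.
exists (maxn B (size z + \sum_(i < size z) size (z`_i)%R)) => z'.
rewrite inE => /predU1P [-> m n zmn|/IH bound_z' m n /bound_z' [? ?]]; last first.
  by split; apply: leq_trans (leq_maxl _ _).
have lt_m : (m < size z)%N.
  by rewrite ltnNge; apply: contraNN zmn => /(nth_default 0) ->; rewrite coef0.
have lt_n : (n < size (z`_m)%R)%N.
  by rewrite ltnNge; apply: contraNN zmn => /(nth_default 0) ->.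
split; apply: leq_trans (leq_maxr _ _); first exact: ltn_addr.
apply: leq_trans lt_n _; rewrite (bigD1 (Ordinal lt_m)) //=.
by rewrite addnCA leq_addr.
Qed.

End MonomialSpans.

Section MonomialSets.
Variables e r c d mu : nat.
Hypotheses (e_ge2 : (2 <= e)%N) (c_gt0 : (0 < c)%N) (d_dvd : (d %| e - 1)%N)
  (mu_gt0 : (0 < mu)%N) (r_ge : (c * Sigma e mu.-1 <= r)%N).

Lemma inT_inTt n m : inT e c d r mu n m -> inTt c d n m.
Proof. by case/and3P => le_cm d_dvd_n _; rewrite /inTt eqn_mod_dvd. Qed.

Lemma ore_closed_inTt : ore_closed e r (inTt c d).
Proof.
move=> n1 m1 n2 m2 k /eqP n1_eq /eqP n2_eq _ _; apply/eqP.
rewrite -modnDmr (eqP (dvdn_mull k d_dvd)) addn0.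
by rewrite -modnDm n1_eq n2_eq modnDm mulnDr.
Qed.

Lemma ore_closed_inT : ore_closed e r (inT e c d r mu).
Proof.
move=> n1 m1 n2 m2 k /and3P [le1 d1 Sb1] /and3P [le2 d2 Sb2] le_kr le_k.
apply/and3P; rewrite mulnDr; split.
- by rewrite -addnA leq_add // (leq_trans le2) ?leq_addr.
- move: le1 le2; set a := (c * m1)%N; set b := (c * m2)%N; set K := (k * (e - 1))%N.
  move=> le1 le2; rewrite (_ : n1 + n2 + K - (a + b) = n1 - a + (n2 - b) + K)%N.
    by rewrite !dvdn_add // dvdn_mull.
  by clear -le1 le2; lia.
- exact: Sbar_product_bound.
Qed.

End MonomialSets.

Lemma regularS_lead (R : nzRingType) (u : {poly R}) :
  GRing.lreg (lead_coef u) -> GRing.rreg (lead_coef u) -> regularS u.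
Proof.
move=> /lreg_lead lreg_u /rreg_lead rreg_u q; split=> uq0.
  by apply: lreg_u; rewrite uq0 mulr0.
by apply: rreg_u; rewrite uq0 mul0r.
Qed.

Lemma regularS_Xn (R : nzRingType) n : regularS ('X^n : {poly R}).
Proof. by apply: regularS_lead; rewrite lead_coefXn; [apply: lreg1 | apply: rreg1]. Qed.

Section Essential.
Variable R : nzRingType.
Variables p e r c d mu : nat.
Hypotheses (e_ge2 : (2 <= e)%N) (r_gt0 : (0 < r)%N) (c_gt0 : (0 < c)%N)
  (d_gt0 : (0 < d)%N) (d_dvd : (d %| e - 1)%N) (mu_gt0 : (0 < mu)%N)
  (r_ge : (c * Sigma e mu.-1 <= r)%N).
Hypothesis charR : forall n : nat, (n%:R == 0 :> R) = (p ^ r.+1 %| n)%N.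

Local Notation alpha := (@alphaX R p e).
Local Notation ore_mul := (@ore_mul R p e).
Local Notation A := (spanMon (R := R) (inT e c d r mu)).
Local Notation At := (spanMon (R := R) (inTt c d)).

Section Witness.
Variable B : nat.

(* Past [mu], [Sbar] grows by [c + r (e - 1)] per unit of [m], which leaves
   room above [x^N y^M] for all monomials of degrees below [B]. *)
Let M := (mu + d * c * B + B + r * (e - 1))%N.
Let N := (c * M + d * c * B)%N.
Let w : {poly {poly R}} := ('X^N)%:P * 'X^M.

Lemma coef_witness_neq0 m n : (w`_m)`_n != 0 -> m = M /\ n = N.
Proof.
rewrite /w coef_monomial; case: ifP => [/eqP ->|_]; last by rewrite coef0 eqxx.
by rewrite coefXn; have [->|_] /= := eqVneq n N; rewrite ?mulr0n ?eqxx.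
Qed.

Lemma witness_room : (N + B + r * (e - 1) <= Sbar e c r mu M)%N.
Proof.
have mu_M : (mu <= M)%N by rewrite /M -!addnA leq_addr.
have := Sbar_large_ge e_ge2 c_gt0 mu_gt0 r_ge mu_M.
have : (M - mu <= (M - mu) * r * (e - 1))%N.
  by rewrite -mulnA leq_pmulr // muln_gt0 r_gt0 subn_gt0.
rewrite /N /M; nia.
Qed.

Lemma A_witness : A w.
Proof.
move=> m n /coef_witness_neq0 [-> ->]; apply/and3P; split.
- by rewrite /N leq_addr.
- by rewrite /N addKn dvdn_mulr // dvdn_mulr.
- by have := witness_room; lia.
Qed.

Lemma A_ore_mul_witness z : At z ->
  (forall m n, (z`_m)`_n != 0 -> (m < B)%N /\ (n < B)%N) -> A (ore_mul w z).
Proof.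
move=> At_z z_bound m' N' /(coef_ore_mul_support e_ge2 charR).
move=> [i [j [a [n [k [-> /coef_witness_neq0 [-> ->] zjn -> [le_kr le_k]]]]]]].
have [lt_jB lt_nB] := z_bound _ _ zjn.
have le_cj : (c * j <= d * c * B)%N.
  by rewrite -mulnA (leq_trans _ (leq_pmull _ d_gt0)) // leq_mul // ltnW.
have le_cMj : (c * (M + j) <= N + n + k * (e - 1))%N by rewrite mulnDr /N; lia.
apply/and3P; split => //.
  rewrite -eqn_mod_dvd //; apply/eqP.
  rewrite -modnDmr (eqP (dvdn_mull k d_dvd)) addn0 -modnDmr (eqP (At_z _ _ zjn)).
  by rewrite modnDmr /N addnAC -modnDmr -mulnA modnMr addn0 mulnDr.
apply: leq_trans (leq_Sbar e_ge2 c_gt0 mu_gt0 r_ge (leq_addr j M)).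
have := witness_room; have : (k * (e - 1) <= r * (e - 1))%N by rewrite leq_mul.
lia.
Qed.

Lemma ore_mul_witness_neq0 z : z != 0 -> ore_mul w z != 0.
Proof.
move=> z_neq0; set j := (size z).-1.
have zj : z`_j != 0 by rewrite -lead_coefE lead_coef_eq0.
apply/eqP => wz0; have := coef_ore_mul_monomial_l p e ('X^N) M z (M + j).
rewrite -/w wz0 coef0 leq_addr addKn => /esym/eqP.
have alpha_zj : iter M alpha z`_j != 0 by rewrite (iter_alpha_eq0 p e_ge2).
rewrite -commr_polyXn -size_poly_eq0 size_mulXn // addn_eq0 size_poly_eq0.
by rewrite (negPf alpha_zj) andbF.
Qed.

Lemma ore_mul_witness_reg a : ore_mul a w = 0 -> a = 0.
Proof.
move=> aw0; apply/polyP => m; rewrite coef0.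
have := coef_ore_mul_monomial_r p e a ('X^N) M (m + M).
rewrite -/w aw0 coef0 leq_addl addnK.
have XN_low i : (i < N)%N -> ('X^N : {poly R})`_i = 0.
  by move=> lt_iN; rewrite coefXn; case: eqP => // i_eq; lia.
have [alpha_low alpha_N] := iter_alpha_lowest p e_ge2 m XN_low.
have : GRing.rreg (iter m alpha 'X^N).
  by apply: (rreg_lowest_coef1 alpha_low); rewrite alpha_N coefXn eqxx.
by move=> alpha_reg /esym am0; apply: alpha_reg; rewrite am0 mul0r.
Qed.

End Witness.

Lemma strongly_nicely_essential_inT : strongly_nicely_essential p e A At.
Proof.
split.
  split=> [f Af m n /Af|E E_At]; first exact: inT_inTt.
  have [B B_E] := exists_support_bound E.
  eexists; split=> [|z z_E]; first exact: A_witness.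
  have [At_z z_neq0] := E_At z z_E.
  split; first exact: ore_mul_witness_neq0.
  exact: A_ore_mul_witness At_z (B_E z z_E).
move=> z At_z; have [B B_z] := exists_support_bound [:: z].
eexists; split; first exact: A_witness.
split.
  by move=> a _; apply: ore_mul_witness_reg.
by apply: A_ore_mul_witness At_z _ => m n; apply: B_z; rewrite mem_seq1.
Qed.

End Essential.

Lemma spanMon_coef_monomial (R : nzRingType) (P : nat -> nat -> bool)
    (f : {poly {poly R}}) m :
  spanMon P f -> spanMon P ((f`_m)%:P * 'X^m).
Proof.
move=> Pf m' n; rewrite coef_monomial.
by case: ifP => [/eqP ->|_]; [apply: Pf | rewrite coef0 eqxx].
Qed.

Section SpecialSubextension.
Variable R : nzRingType.
Variables p e r c d : nat.
Hypotheses (e_ge2 : (2 <= e)%N) (d_gt0 : (0 < d)%N) (d_dvd : (d %| e - 1)%N).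
Hypothesis charR : forall n : nat, (n%:R == 0 :> R) = (p ^ r.+1 %| n)%N.

Local Notation alpha := (@alphaX R p e).
Local Notation ore_mul := (@ore_mul R p e).
Local Notation At := (spanMon (R := R) (inTt c d)).
Local Notation lambda m := (('X^(c * m))%:P * 'X^m : {poly {poly R}}).

Lemma At_lambda m : At (lambda m).
Proof.
move=> m' n; rewrite coef_monomial; case: ifP => [/eqP ->|_]; last by rewrite coef0 eqxx.
by rewrite coefXn /inTt; have [->|_] /= := eqVneq n (c * m)%N; rewrite ?mulr0n ?eqxx.
Qed.

Lemma Deg_y_At k : Deg_y At k.
Proof.
have Xn_neq0 : 'X^(c * k) != 0 :> {poly R} by rewrite -lead_coef_eq0 lead_coefXn oner_neq0.
have size_lambda : size (lambda k) = k.+1.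
  by rewrite size_mulXn ?polyC_eq0 // size_polyC Xn_neq0 addn1.
by exists (lambda k); rewrite -size_poly_eq0 size_lambda; split; first exact: At_lambda.
Qed.

Lemma is_dA_At : is_dA At 1.
Proof. by split=> [k _ _|g g_dvd]; [apply: dvd1n | apply: g_dvd (Deg_y_At 1) _]. Qed.

Lemma At_polyXd (q : {poly R}) : polyXd d q -> At q%:P.
Proof.
move=> Xd_q m n; rewrite coefC; case: ifP => [/eqP ->|_]; last by rewrite coef0 eqxx.
by move=> /Xd_q; rewrite /inTt muln0 mod0n.
Qed.

Lemma ring_aut_on_iter_alpha m : ring_aut_on (polyXd d) (iter m alpha).
Proof.
split; first by move=> q; apply: polyXd_iter_alpha.
split; first exact: rmorph1.
split; first by move=> q q' _ _; apply: rmorphB.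
split; first by move=> q q' _ _; apply: rmorphM.
split; first by move=> q q' _ _; apply: iter_alpha_inj.
by move=> q; apply: iter_alpha_onto_polyXd.
Qed.

Lemma ore_mul_lambda_polyC m (q : {poly R}) :
  ore_mul (lambda m) q%:P = ore_mul (iter m alpha q)%:P (lambda m).
Proof.
apply/polyP => k; rewrite coef_ore_mul_monomial_l coef_ore_mulC_l coef_monomial coefC.
have [->|ne_km] := eqVneq k m; first by rewrite leqnn subnn /= commr_polyXn.
rewrite mulr0; case: leqP => // le_mk.
by rewrite (_ : (k - m == 0)%N = false) ?rmorph0 ?mulr0 //; apply/eqP; lia.
Qed.

Lemma lambda_dvd_At_monomial m (q : {poly R}) : At (q%:P * 'X^m) ->
  exists u, polyXd d u /\ regularS u /\
    exists2 b, polyXd d b & ore_mul u%:P (q%:P * 'X^m) = ore_mul b%:P (lambda m).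
Proof.
move=> At_q; exists ('X^(d * (c * m))); split.
  move=> n; rewrite coefXn.
  by have [->|_] := eqVneq n (d * (c * m))%N; rewrite ?dvdn_mulr ?eqxx.
split; first exact: regularS_Xn.
exists ('X^((d - 1) * (c * m)) * q); last first.
  apply/polyP => k; rewrite !coef_ore_mulC_l !coef_monomial.
  case: ifP => _; last by rewrite !mulr0.
  rewrite -mulrA commr_polyXn mulrA -exprD.
  by rewrite -[in X in 'X^X](subnK d_gt0) mulnDl mul1n.
move=> n; rewrite coefXnM; case: ltnP => [_|le_n]; first by rewrite eqxx.
move=> qn; have := At_q m (n - (d - 1) * (c * m))%N.
rewrite coef_monomial eqxx => /(_ qn) /eqP qn_mod.
rewrite -(subnKC le_n) /dvdn -modnDmr qn_mod modnDmr -{2}[(c * m)%N]mul1n -mulnDl.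
by rewrite subnK // modnMr.
Qed.

Lemma special_with_At : special_with p e At (fun m => lambda m) (fun _ => polyXd d)
  (fun m => iter m alpha).
Proof.
split; first by move=> f m; apply: spanMon_coef_monomial.
split.
  by exists 1%N; split; [exact: is_dA_At | split=> _; [apply: dvd1n | apply: Deg_y_At]].
move=> m _ _; split; first by exists ('X^(c * m)); split => //; apply: regularS_Xn.
split; first exact: At_lambda.
split; first by split; [apply: polyXd_Rsubring | apply: At_polyXd].
split; first exact: ring_aut_on_iter_alpha.
split; first by move=> q _; rewrite ore_mul_lambda_polyC subrr size_poly0.
exact: lambda_dvd_At_monomial.
Qed.

End SpecialSubextension.

Theorem mainTheorem20 (R : nzRingType) (p e r c d mu : nat) :
  prime p -> (2 <= e)%N -> (2 <= r)%N -> (1 <= c)%N -> (1 <= d)%N ->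
  (d %| e - 1)%N ->
  (forall n : nat, (n%:R == 0 :> R) = (p ^ r.+1 %| n)%N) ->
  (1 <= mu)%N -> (c * Sigma e mu.-1 <= r)%N -> (r < c * Sigma e mu)%N ->
  let A  := spanMon (R := R) (fun n m => inT e c d r mu n m) in
  let At := spanMon (R := R) (fun n m => inTt c d n m) in
  [/\ ore_subring p e A,
      ore_subring p e At,
      strongly_nicely_essential p e A At,
      special_with p e At
        (fun m => ('X^(c * m))%:P * 'X^m)
        (fun _ => polyXd d)
        (fun m => iter m (alphaX p e)) &
      special_subextension p e At].
Proof.
move=> _ e_ge2 r_ge2 c_gt0 d_gt0 d_dvd charR mu_gt0 r_ge _ A At; rewrite {}/A {}/At.
have special := special_with_At c e_ge2 d_gt0 d_dvd charR.
split.
- apply: (ore_subring_spanMon e_ge2 charR); first by rewrite /inT muln0 subn0 dvdn0.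
  exact: ore_closed_inT e_ge2 c_gt0 d_dvd mu_gt0 r_ge.
- apply: (ore_subring_spanMon e_ge2 charR); first by rewrite /inTt muln0.
  exact: ore_closed_inTt d_dvd.
- exact: strongly_nicely_essential_inT e_ge2 (ltnW r_ge2) c_gt0 d_gt0 d_dvd mu_gt0 r_ge charR.
- exact: special.
- by do 3 eexists; apply: special.
Qed.
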